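(* Let $P_n=\{0,1,2,3\}^n$ with order $\le_n$ and $p^m_k$ restriction to the first $k$ coordinates, let $\mathbb{P}$ be their inverse limit and $\mathbb{O}(\mathbb{P})$ the associated limit of order ideals. For $n\in\mathbb{N}$ let $T_n=\{c\in\{0,1,2,3\}^n:c(0)\in\{0,1\}\}$ and let $q^{n+1}_n:\{0,1,2\}^{T_{n+1}}\to\{0,1,2\}^{T_n}$ be given by $q^{n+1}_n(f)(c)=\max\{f(c^\frown0),f(c^\frown1),\min\{f(c^\frown2),1\},2\min\{f(c^\frown3),1\}\}$, with $q^n_k=q^{k+1}_k\circ\dots\circ q^n_{n-1}$. Then $\mathbb{O}(\mathbb{P})$ is order-isomorphic (hence lattice-isomorphic) to the inverse limit $\{(f_n)\in\prod_n\{0,1,2\}^{T_n}:q^{n+1}_n(f_{n+1})=f_n\ \forall n\}$ with the coordinatewise (pointwise) order.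
   Context: $x\le_n y$ iff $x=y$ or (i) there is $l<n$ with $x(k)=y(k)$ for $k<l$, $x(l)=2$, $y(l)=3$, and $x(k)=y(k)\in\{0,1\}$ for $l<k<n$; or (ii) $x(0)=0$, $y(0)=1$ and $x(k)=y(k)\in\{0,1\}$ for $1\le k<n$. $c^\frown i$ denotes the sequence $c$ extended by $i$. $\mathcal{O}(P_n)$ is the set of down-sets of $P_n$ under inclusion, $\downarrow x=\{m:m\le x\}$; for a quotient map $p:Q\to R$ of finite posets, $\hat p(\emptyset)=\emptyset$ and $\hat p(A)=\bigcup_i\downarrow p(a_i)$ over the maximal elements $a_i$ of $A$; $\mathbb{O}(\mathbb{P})=\{(A_n)\in\prod_n\mathcal{O}(P_n):\widehat{p^{n+1}_n}(A_{n+1})=A_n\ \forall n\}$ ordered coordinatewise by inclusion. *)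

From mathcomp Require Import all_boot.
Set Implicit Arguments. Unset Strict Implicit. Unset Printing Implicit Defensive.

Definition P (n : nat) : finType := {ffun 'I_n -> 'I_4}.

Definition leP (n : nat) (x y : P n) : bool :=
  (x == y)
  || [exists l : 'I_n,
        [forall k : 'I_n, (k < l) ==> (x k == y k)] &&
        (val (x l) == 2) && (val (y l) == 3) &&
        [forall k : 'I_n, (l < k) ==> ((x k == y k) && (val (x k) < 2))]]
  || [exists k0 : 'I_n,
        (val k0 == 0) && (val (x k0) == 0) && (val (y k0) == 1) &&
        [forall k : 'I_n, (0 < k) ==> ((x k == y k) && (val (x k) < 2))]].

Definition downset (n : nat) (A : {set P n}) : Prop :=
  forall x y : P n, leP y x -> x \in A -> y \in A.

Definition restr (n : nat) (x : P n.+1) : P n :=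
  [ffun i : 'I_n => x (widen_ord (leqnSn n) i)].

Definition maximal_in (n : nat) (A : {set P n}) (a : P n) : bool :=
  (a \in A) && [forall b : P n, ((b \in A) && leP a b) ==> (b == a)].

Definition hatp (n : nat) (A : {set P n.+1}) : {set P n} :=
  \bigcup_(a : P n.+1 | maximal_in A a) [set m : P n | leP m (restr a)].

Definition OP : Type :=
  {A : forall n, {set P n} |
     (forall n, downset (A n)) /\ (forall n, hatp (A n.+1) = A n)}.

Definition OP_le (A B : OP) : Prop := forall n, proj1_sig A n \subset proj1_sig B n.

(* T_n = {c in {0,1,2,3}^n : c(0) in {0,1}}  (empty for n = 0) *)
Definition inT (n : nat) (c : P n) : bool :=
  [exists k : 'I_n, (val k == 0) && (val (c k) < 2)].

Definition T (n : nat) : finType := {c : P n | inT c}.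

Definition snoc (n : nat) (c : P n) (i : 'I_4) : P n.+1 :=
  [ffun k : 'I_n.+1 => if unlift ord_max k is Some j then c j else i].

(* f on T_{n+1}, read on all of P_{n+1} (0 outside T_{n+1}; only used on T_{n+1}) *)
Definition extT (n : nat) (f : {ffun T n -> 'I_3}) (c : P n) : nat :=
  if @insub _ (@inT n) (T n) c is Some t then val (f t) else 0.

Definition q (n : nat) (f : {ffun T n.+1 -> 'I_3}) : {ffun T n -> 'I_3} :=
  [ffun t : T n =>
     let e := fun i : 'I_4 => extT f (snoc (val t) i) in
     inord (maxn (maxn (e (inord 0)) (e (inord 1)))
                 (maxn (minn (e (inord 2)) 1) (2 * minn (e (inord 3)) 1)))].

Definition QL : Type :=
  {f : forall n, {ffun T n -> 'I_3} | forall n, q (f n.+1) = f n}.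

Definition QL_le (f g : QL) : Prop :=
  forall n (c : T n), val (proj1_sig f n c) <= val (proj1_sig g n c).

(* For n >= 1 the poset P_n is a disjoint union of two-element chains indexed
   by T_n: every x lies on the chain [chain x] at height [upper x], and
   x <=_n y iff x and y lie on the same chain with upper x <= upper y.  Down-sets
   of P_n are therefore the maps T_n -> {0,1,2} recording how many points of
   each chain they contain.  The maximal points of such a down-set in P_(n+1)
   are the tops of its chains, and restricting them to n coordinates and closing
   downwards gives exactly the down-set encoded by q^(n+1)_n, which is why the
   two inverse systems agree.  Level 0 carries no information: A_0 is
   determined by A_1, and T_0 is empty. *)

From Pilot Require Import Defs.
From mathcomp Require Import all_boot zify.
From Stdlib Require Import FunctionalExtensionality ProofIrrelevance.
Set Implicit Arguments. Unset Strict Implicit. Unset Printing Implicit Defensive.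

(* ssrnat's reflection lemma [leP] hides the order of [Defs]. *)
Local Notation leP := Defs.leP.

Lemma P0_eq (x y : P 0) : x = y.
Proof. by apply/ffunP => -[]. Qed.

Lemma T0_empty (t : T 0) : False.
Proof. by case: t => c /existsP[[]]. Qed.

Lemma val_lift_max n (k : 'I_n) : val (lift ord_max k) = val k.
Proof. exact: lift_max. Qed.

Lemma snoc_max n (x : P n) i : snoc x i ord_max = i.
Proof. by rewrite ffunE unlift_none. Qed.

Lemma snoc_lift n (x : P n) i k : snoc x i (lift ord_max k) = x k.
Proof. by rewrite ffunE liftK. Qed.

Lemma restrE n (x : P n.+1) k : restr x k = x (lift ord_max k).
Proof. by rewrite ffunE; congr (x _); apply/val_inj; rewrite val_lift_max. Qed.

Lemma restr_snoc n (x : P n) i : restr (snoc x i) = x.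
Proof. by apply/ffunP => k; rewrite restrE snoc_lift. Qed.

Lemma snoc_restr n (y : P n.+1) : snoc (restr y) (y ord_max) = y.
Proof.
by apply/ffunP => k; rewrite ffunE; case: unliftP => [j ->|->] //; rewrite restrE.
Qed.

Lemma eq_snoc n (x y : P n) i j : (snoc x i == snoc y j) = (x == y) && (i == j).
Proof.
apply/eqP/andP => [E|[/eqP-> /eqP->]] //.
by split; apply/eqP; [rewrite -(restr_snoc x i) E restr_snoc|rewrite -(snoc_max x i) E snoc_max].
Qed.

Definition le23 n (x y : P n) : bool :=
  [exists l : 'I_n,
     [forall k : 'I_n, (k < l) ==> (x k == y k)] &&
     (val (x l) == 2) && (val (y l) == 3) &&
     [forall k : 'I_n, (l < k) ==> ((x k == y k) && (val (x k) < 2))]].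

Definition le01 n (x y : P n) : bool :=
  [exists k0 : 'I_n,
     (val k0 == 0) && (val (x k0) == 0) && (val (y k0) == 1) &&
     [forall k : 'I_n, (0 < k) ==> ((x k == y k) && (val (x k) < 2))]].

Lemma lePE n (x y : P n) : leP x y = [|| x == y, le23 x y | le01 x y].
Proof. by rewrite /Defs.leP orbA. Qed.

Lemma le23_snoc n (x y : P n) i j :
  le23 (snoc x i) (snoc y j) =
  (x == y) && (val i == 2) && (val j == 3) || (i == j) && (val i < 2) && le23 x y.
Proof.
apply/idP/idP.
  case/existsP => l /andP[/andP[/andP[/forallP below xl] yl] /forallP above].
  case: (unliftP ord_max l) => [l' El|El]; subst l.
    rewrite !snoc_lift in xl yl.
    have := above ord_max; rewrite lift_max ltn_ord !snoc_max => /andP[-> ->].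
    apply/orP; right; apply/existsP; exists l'; rewrite xl yl !andbT.
    apply/andP; split; apply/forallP => k.
      by have := below (lift ord_max k); rewrite !lift_max !snoc_lift.
    by have := above (lift ord_max k); rewrite !lift_max !snoc_lift.
  rewrite !snoc_max in xl yl; rewrite xl yl !andbT; apply/orP; left.
  apply/eqP/ffunP => k; have := below (lift ord_max k).
  by rewrite lift_max ltn_ord !snoc_lift => /eqP.
case/orP => [/andP[/andP[/eqP <- i2] j3]|/andP[/andP[/eqP <- i_lt2] /existsP[l]]].
  apply/existsP; exists ord_max; rewrite !snoc_max i2 j3 !andbT /=.
  apply/andP; split; apply/forallP => k; case: (unliftP ord_max k) => [k' ->|->].
  - by rewrite !snoc_lift eqxx implybT.
  - by rewrite ltnn.
  - by rewrite lift_max ltnNge leq_eqVlt ltn_ord orbT.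
  - by rewrite ltnn.
case/andP => /andP[/andP[/forallP below xl] yl] /forallP above.
apply/existsP; exists (lift ord_max l); rewrite !snoc_lift xl yl !andbT.
apply/andP; split; apply/forallP => k; case: (unliftP ord_max k) => [k' ->|->].
- by rewrite !lift_max !snoc_lift; apply: below.
- by rewrite lift_max ltnNge leq_eqVlt ltn_ord orbT.
- by rewrite !lift_max !snoc_lift; apply: above.
- by rewrite !snoc_max eqxx i_lt2 implybT.
Qed.

Lemma le01_snoc n (x y : P n) i j :
  le01 (snoc x i) (snoc y j) =
  (n == 0) && (val i == 0) && (val j == 1) || (0 < n) && (i == j) && (val i < 2) && le01 x y.
Proof.
apply/idP/idP.
  case/existsP => k0 /andP[/andP[/andP[/eqP k0_0 xk0] yk0] /forallP above].
  case: (unliftP ord_max k0) => [k' Ek|Ek]; subst k0.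
    rewrite !snoc_lift in xk0 yk0; rewrite val_lift_max in k0_0.
    have n_gt0 : 0 < n by rewrite -k0_0 ltn_ord.
    have := above ord_max; rewrite n_gt0 !snoc_max => /andP[-> ->].
    apply/orP; right; apply/existsP; exists k'; rewrite xk0 yk0 /= k0_0.
    by apply/forallP => k; have := above (lift ord_max k); rewrite !lift_max !snoc_lift.
  have n0 : n == 0 by apply/eqP.
  by rewrite !snoc_max in xk0 yk0; rewrite n0 xk0 yk0.
case/orP => [/andP[/andP[/eqP n0 i0] j1]|].
  subst n; apply/existsP; exists ord_max; rewrite !snoc_max i0 j1 /=.
  by apply/forallP => -[[|[]]].
case/andP => /andP[/andP[n_gt0 /eqP <-] i_lt2] /existsP[k0].
case/andP => /andP[/andP[k0_0 xk0] yk0] /forallP above.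
apply/existsP; exists (lift ord_max k0); rewrite !snoc_lift val_lift_max k0_0 xk0 yk0 /=.
apply/forallP => k; case: (unliftP ord_max k) => [k' ->|->].
  by rewrite !lift_max !snoc_lift; apply: above.
by rewrite !snoc_max eqxx i_lt2 implybT.
Qed.

Lemma leP_snoc n (x y : P n) i j :
  leP (snoc x i) (snoc y j) =
  (x == y) && [|| i == j, (val i == 2) && (val j == 3) | (n == 0) && (val i == 0) && (val j == 1)]
  || (i == j) && (val i < 2) && leP x y.
Proof.
rewrite !lePE le23_snoc le01_snoc eq_snoc.
case: n x y => [|n] x y.
  have -> : y = x by apply: P0_eq.
  by rewrite eqxx; case: (i == j); case: (val i == 2); case: (val j == 3);
     case: (val i < 2); case: le23; case: le01; case: (val i == 0); case: (val j == 1).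
by case: (x == y); case: (i == j); case: (val i == 2); case: (val j == 3);
   case: (val i < 2); case: le23; case: le01.
Qed.

(* At level 1 the chains are {0,1} and {2,3}.  Above that, a last coordinate 0
   or 1 continues the chain of the prefix, while 2 and 3 form a new chain whose
   name records, through the last digit 2 or 3, the height of the prefix. *)
Definition digit (n : nat) (s : bool) (i : 'I_4) : 'I_4 :=
  inord (if n == 0 then i./2 else if i < 2 then nat_of_ord i else 2 + s).

Fixpoint upper (n : nat) : P n -> bool :=
  match n with
  | 0 => fun _ => false
  | m.+1 => fun x => if (m == 0) || (1 < x ord_max) then odd (x ord_max) else upper (restr x)
  end.

Fixpoint chain (n : nat) : P n -> P n :=
  match n with
  | 0 => fun x => x
  | m.+1 => fun x => snoc (chain (restr x)) (digit m (upper (restr x)) (x ord_max))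
  end.

Lemma upper_snoc n (x : P n) i :
  upper (snoc x i) = if (n == 0) || (1 < i) then odd i else upper x.
Proof. by rewrite /= restr_snoc snoc_max. Qed.

Lemma chain_snoc n (x : P n) i : chain (snoc x i) = snoc (chain x) (digit n (upper x) i).
Proof. by rewrite /= restr_snoc snoc_max. Qed.

Lemma digit_val n s i :
  val (digit n s i) = if n == 0 then i./2 else if i < 2 then nat_of_ord i else 2 + s.
Proof.
rewrite /digit /= inordK //; case: (n == 0); first by case: i => [[|[|[|[|]]]]].
by case: ifP => [/ltnW/leqW/leqW|_] //; case: s.
Qed.

Lemma split_bit_inj a b : a < 4 -> b < 4 -> a./2 = b./2 -> odd a = odd b -> a = b.
Proof. by case: a => [|[|[|[|]]]] //; case: b => [|[|[|[|]]]]. Qed.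

Lemma digit_upper_inj a b (s t : bool) : a < 4 -> b < 4 ->
  (if a < 2 then a else 2 + s) = (if b < 2 then b else 2 + t) ->
  (if 1 < a then odd a else s) = (if 1 < b then odd b else t) -> a = b /\ s = t.
Proof. by case: a => [|[|[|[|]]]] //; case: b => [|[|[|[|]]]] //; case: s; case: t. Qed.

Lemma chain_upper_inj n (x y : P n) : chain x = chain y -> upper x = upper y -> x = y.
Proof.
elim: n x y => [|n IH] x y; first by rewrite (P0_eq x y).
rewrite -(snoc_restr x) -(snoc_restr y) !chain_snoc !upper_snoc.
move: (restr x) (restr y) (x ord_max) (y ord_max) => {}x {}y i j.
move/eqP; rewrite eq_snoc => /andP[/eqP Exy /eqP/(congr1 val)]; rewrite !digit_val.
case: (n =P 0) => [n0|_] /= Eij Eu.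
  subst n; rewrite (P0_eq x y); congr snoc; apply/val_inj.
  exact: split_bit_inj (ltn_ord i) (ltn_ord j) Eij Eu.
have [/val_inj -> Es] := digit_upper_inj (ltn_ord i) (ltn_ord j) Eij Eu.
by rewrite (IH x y Exy Es).
Qed.

Lemma split_bit_le a b : a < 4 -> b < 4 ->
  [|| a == b, (a == 2) && (b == 3) | (a == 0) && (b == 1)] = (a./2 == b./2) && (odd a <= odd b).
Proof. by case: a => [|[|[|[|]]]] //; case: b => [|[|[|[|]]]]. Qed.

Lemma digit_upper_le a b (s t : bool) : a < 4 -> b < 4 ->
  (s == t) && ((a == b) || (a == 2) && (b == 3)) || (a == b) && (a < 2) && (s <= t) =
  ((if a < 2 then a else 2 + s) == (if b < 2 then b else 2 + t))
  && ((if 1 < a then odd a else s) <= (if 1 < b then odd b else t)).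
Proof. by case: a => [|[|[|[|]]]] //; case: b => [|[|[|[|]]]] //; case: s; case: t. Qed.

Lemma leP_chain n (x y : P n) : leP x y = (chain x == chain y) && (upper x <= upper y).
Proof.
elim: n x y => [|n IH] x y; first by rewrite (P0_eq x y) lePE !eqxx.
rewrite -(snoc_restr x) -(snoc_restr y) leP_snoc !chain_snoc !upper_snoc eq_snoc IH.
move: (restr x) (restr y) (x ord_max) (y ord_max) => {}x {}y i j.
rewrite -!val_eqE !digit_val.
case: (n =P 0) => [n0|_] /=.
  subst n; rewrite (P0_eq x y) !eqxx /= -split_bit_le ?ltn_ord //.
  by case: (val i == val j); rewrite ?orbF.
have -> : (x == y) = (chain x == chain y) && (upper x == upper y).
  by apply/eqP/andP => [-> //|[/eqP Ec /eqP Eu]]; apply: chain_upper_inj.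
case: (chain x == chain y); rewrite ?andbF //=.
by rewrite orbF -digit_upper_le ?ltn_ord.
Qed.

Lemma inT_snoc n (c : P n) j : inT (snoc c j) = (n == 0) && (val j < 2) || inT c.
Proof.
apply/existsP/orP => [[k /andP[/eqP k0 ck]]|].
  case: (unliftP ord_max k) => [k' Ek|Ek]; subst k.
    by right; apply/existsP; exists k'; rewrite snoc_lift in ck; rewrite -val_lift_max k0 ck.
  by left; rewrite snoc_max in ck; rewrite ck andbT; apply/eqP.
case=> [/andP[/eqP n0 j_lt2]|/existsP[k /andP[k0 ck]]].
  by exists ord_max; rewrite snoc_max j_lt2 andbT; apply/eqP.
by exists (lift ord_max k); rewrite snoc_lift val_lift_max k0.
Qed.

Lemma inT_gt0 n (c : P n) : inT c -> 0 < n.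
Proof. by case/existsP => k _; apply: leq_ltn_trans (ltn_ord k). Qed.

Lemma inT_chain n (x : P n) : 0 < n -> inT (chain x).
Proof.
elim: n x => [|n IH] x // _.
rewrite -(snoc_restr x) chain_snoc inT_snoc.
case: (n =P 0) => [n0|/eqP n_neq0]; last by rewrite IH ?orbT // lt0n.
by subst n; rewrite digit_val /=; case: (x ord_max) => [[|[|[|[|]]]]].
Qed.

Lemma chain_upper_surj n (c : P n) (s : bool) :
  inT c -> exists x, chain x = c /\ upper x = s.
Proof.
elim: n c s => [|n IH] c s; first by move/inT_gt0.
rewrite -(snoc_restr c) inT_snoc; move: (restr c) (c ord_max) => {}c j.
case: (n =P 0) => [n0|/eqP n_neq0].
  subst n => /orP[/andP[_ j_lt2]|/inT_gt0] //.
  have lt4 : 2 * j + s < 4 by case: j j_lt2 => [[|[|]] ?] //; case: s.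
  exists (snoc c (Ordinal lt4)); rewrite chain_snoc upper_snoc (P0_eq (chain c) c).
  split; last by rewrite /= oddD oddM; clear lt4; case: s.
  congr snoc; apply/val_inj; rewrite digit_val /=.
  by case: j j_lt2 {lt4} => [[|[|]] ?] //; case: s.
move=> inT_c; rewrite /= in inT_c; have not0 : (n == 0) = false by apply/negbTE.
case: (ltnP j 2) => [j_lt2|j_ge2].
  have [x [<- <-]] := IH c s inT_c.
  exists (snoc x j); rewrite chain_snoc upper_snoc not0 ltnNge -ltnS j_lt2; split => //.
  by congr snoc; apply/val_inj; rewrite digit_val not0 j_lt2.
have [x [<- ux]] := IH c (val j == 3) inT_c.
have lt4 : 2 + s < 4 by case: s.
exists (snoc x (Ordinal lt4)); rewrite chain_snoc upper_snoc not0 /=.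
split; last by clear lt4; case: s.
congr snoc; apply/val_inj; rewrite digit_val not0 /= ux.
by clear lt4; case: s; case: j j_ge2 {ux} => [[|[|[|[|]]]]].
Qed.

Definition chain_pt n (c : P n) (s : bool) : P n :=
  odflt c [pick x | (chain x == c) && (upper x == s)].

Lemma chain_ptP n (c : P n) s : inT c -> chain (chain_pt c s) = c /\ upper (chain_pt c s) = s.
Proof.
rewrite /chain_pt => inT_c; case: pickP => [x /andP[/eqP-> /eqP->] //|none].
have [x [cx ux]] := chain_upper_surj s inT_c.
by move: (none x); rewrite cx ux !eqxx.
Qed.

Lemma chain_ptK n (x : P n) : 0 < n -> chain_pt (chain x) (upper x) = x.
Proof.
move=> n_gt0; have [cx ux] := chain_ptP (upper x) (inT_chain x n_gt0).
exact: chain_upper_inj.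
Qed.

Lemma extT_val n (f : {ffun T n -> 'I_3}) (t : T n) : extT f (val t) = f t.
Proof. by rewrite /extT valK. Qed.

Lemma extT_le2 n (f : {ffun T n -> 'I_3}) c : extT f c <= 2.
Proof. by rewrite /extT; case: insub => [t|] //; rewrite -ltnS ltn_ord. Qed.

Lemma extT_mono n (f g : {ffun T n -> 'I_3}) c :
  (forall t, f t <= g t) -> extT f c <= extT g c.
Proof. by move=> le_fg; rewrite /extT; case: insub. Qed.

Definition chain_set n (f : {ffun T n -> 'I_3}) : {set P n} :=
  [set x | upper x < extT f (chain x)].

Definition chain_count n (A : {set P n}) : {ffun T n -> 'I_3} :=
  [ffun t => inord ((chain_pt (val t) false \in A) + (chain_pt (val t) true \in A))].

Lemma chain_set_downset n (f : {ffun T n -> 'I_3}) : downset (chain_set f).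
Proof.
by move=> x y; rewrite leP_chain !inE => /andP[/eqP-> le_u]; apply: leq_ltn_trans.
Qed.

Lemma chain_set_mono n (f g : {ffun T n -> 'I_3}) :
  (forall t, f t <= g t) -> chain_set f \subset chain_set g.
Proof.
by move=> le_fg; apply/subsetP => x; rewrite !inE => /leq_trans; apply; apply: extT_mono.
Qed.

Lemma chain_count_mono n (A B : {set P n}) t :
  A \subset B -> chain_count A t <= chain_count B t.
Proof.
move/subsetP => sAB; rewrite !ffunE /= !inordK; last 2 first.
- by case: (_ \in B); case: (_ \in B).
- by case: (_ \in A); case: (_ \in A).
by apply: leq_add; case xA: (_ \in A); rewrite // (sAB _ xA).
Qed.

Lemma chain_countK n (f : {ffun T n -> 'I_3}) : chain_count (chain_set f) = f.
Proof.
apply/ffunP => t; apply/val_inj.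
have [c0 u0] := chain_ptP false (valP t); have [c1 u1] := chain_ptP true (valP t).
by rewrite ffunE !inE c0 c1 u0 u1 extT_val /= inordK; case: (f t) => [[|[|[|]]] ?].
Qed.

Lemma chain_setK n (A : {set P n}) : 0 < n -> downset A -> chain_set (chain_count A) = A.
Proof.
move=> n_gt0 downA; apply/setP => x; rewrite inE.
have inT_x := inT_chain x n_gt0.
have [c0 u0] := chain_ptP false inT_x; have [c1 u1] := chain_ptP true inT_x.
have top_bot : chain_pt (chain x) true \in A -> chain_pt (chain x) false \in A.
  by apply: downA; rewrite leP_chain c0 c1 u0 u1 eqxx.
rewrite -[chain x](SubK (T n) inT_x) extT_val ffunE SubK /= inordK; last first.
  by case: (_ \in A); case: (_ \in A).
rewrite -[in RHS](chain_ptK x n_gt0); move: top_bot; case: (upper x).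
  by case: (chain_pt _ true \in A); case: (chain_pt _ false \in A) => // /(_ isT).
by case: (chain_pt _ true \in A); case: (chain_pt _ false \in A) => // /(_ isT).
Qed.

Lemma leP_refl n : reflexive (@leP n).
Proof. by move=> x; rewrite lePE eqxx. Qed.

Lemma leP_restr n (x y : P n.+1) : leP x y -> leP (restr x) (restr y).
Proof.
rewrite -(snoc_restr x) -(snoc_restr y) leP_snoc !restr_snoc.
by case/orP => [/andP[/eqP-> _]|/andP[_ //]]; apply: leP_refl.
Qed.

Lemma leP_trans n : transitive (@leP n).
Proof.
move=> y x z; rewrite !leP_chain => /andP[/eqP-> le_xy] /andP[-> le_yz].
exact: leq_trans le_yz.
Qed.

Lemma upper_maximal n (A : {set P n}) a : a \in A -> upper a -> maximal_in A a.
Proof.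
move=> aA ua; rewrite /maximal_in aA; apply/forallP => b; apply/implyP => /andP[_].
rewrite leP_chain ua => /andP[/eqP cab ub]; apply/eqP/chain_upper_inj => //.
by move: ub; case: (upper b).
Qed.

Lemma mem_hatp n (A : {set P n.+1}) m : (m \in hatp A) = [exists a in A, leP m (restr a)].
Proof.
apply/bigcupP/existsP => [[a /andP[aA _]]|[a /andP[aA le_ma]]].
  by rewrite inE => ?; exists a; rewrite aA.
suff [b max_b le_ab] : exists2 b, maximal_in A b & leP a b.
  by exists b; rewrite // inE (leP_trans le_ma) // leP_restr.
case ua: (upper a); first by exists a; rewrite ?upper_maximal ?leP_refl.
case max_a: (maximal_in A a); first by exists a; rewrite ?leP_refl.
move: max_a; rewrite /maximal_in aA /= => /forallPn[b].
rewrite negb_imply => /andP[/andP[bA le_ab] neq_ba].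
exists b => //; apply: upper_maximal => //; case ub: (upper b) => //.
move: le_ab; rewrite leP_chain => /andP[/eqP cab _].
by rewrite (chain_upper_inj cab (etrans ua (esym ub))) eqxx in neq_ba.
Qed.

Lemma hatp_mono n (A B : {set P n.+1}) : A \subset B -> hatp A \subset hatp B.
Proof.
move/subsetP => sAB; apply/subsetP => m; rewrite !mem_hatp => /existsP[a /andP[/sAB aB le_ma]].
by apply/existsP; exists a; rewrite aB.
Qed.

Definition child n (f : {ffun T n.+1 -> 'I_3}) (c : P n) (k : nat) : nat :=
  extT f (snoc c (inord k)).

Lemma extT_q n (f : {ffun T n.+1 -> 'I_3}) c : inT c ->
  extT (q f) c = maxn (maxn (child f c 0) (child f c 1))
                      (maxn (minn (child f c 2) 1) (2 * minn (child f c 3) 1)).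
Proof.
move=> inT_c; rewrite -[c](SubK (T n) inT_c) extT_val ffunE SubK /= inordK // /child.
have := extT_le2 f (snoc c (inord 0)); have := extT_le2 f (snoc c (inord 1)).
have := extT_le2 f (snoc c (inord 3)).
lia.
Qed.

(* A witness describes the point at height [s'] of a chain, extended by the
   last coordinate [i] (see [mem_chain_set_snoc]). *)
Lemma q_value_spec (s : bool) (e : nat -> nat) : (forall k, e k <= 2) ->
  reflect (exists s' : bool, exists2 i, i < 4 &
             (s <= s') && ((if 1 < i then odd i else s') < e (if i < 2 then i else 2 + s')))
          (s < maxn (maxn (e 0) (e 1)) (maxn (minn (e 2) 1) (2 * minn (e 3) 1))).
Proof.
move=> e_le2; have := e_le2 0; have := e_le2 1; have := e_le2 2; have := e_le2 3.
move=> e3 e2 e1 e0; apply: (iffP idP) => [|[s' [i i_lt4 /andP[le_s]]]].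
  case: s => /= lt_s.
    case: (ltnP 1 (e 0)) => ?; first by exists true, 0.
    case: (ltnP 1 (e 1)) => ?; first by exists true, 1.
    by exists true, 2 => //=; rewrite addn1; lia.
  case: (ltnP 0 (e 0)) => ?; first by exists false, 0.
  case: (ltnP 0 (e 1)) => ?; first by exists false, 1.
  case: (ltnP 0 (e 2)) => ?; first by exists false, 2.
  by exists true, 2 => //=; rewrite addn1; lia.
by case: i i_lt4 => [|[|[|[|]]]] //= _; case: s' le_s; case: s; rewrite //= ?addn0 ?addn1; lia.
Qed.

Lemma mem_chain_set_snoc n (f : {ffun T n.+1 -> 'I_3}) (x : P n) i : 0 < n ->
  (snoc x i \in chain_set f) =
  ((if 1 < i then odd i else upper x) < child f (chain x) (if i < 2 then nat_of_ord i else 2 + upper x)).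
Proof. by move=> n_gt0; rewrite inE chain_snoc upper_snoc /digit (negbTE (lt0n_neq0 n_gt0)). Qed.

Lemma hatp_chain_set n (f : {ffun T n.+1 -> 'I_3}) : 0 < n -> hatp (chain_set f) = chain_set (q f).
Proof.
move=> n_gt0; apply/setP => m; rewrite mem_hatp inE extT_q ?inT_chain //.
apply/existsP/(q_value_spec _ (fun k => extT_le2 _ _)).
  case=> a; rewrite -(snoc_restr a) mem_chain_set_snoc // leP_chain restr_snoc.
  case/andP => lt_a /andP[/eqP-> le_s].
  by exists (upper (restr a)), (a ord_max); rewrite ?ltn_ord ?le_s.
case=> s' [i i_lt4 /andP[le_s lt_i]].
have [c_pt u_pt] := chain_ptP s' (inT_chain m n_gt0).
exists (snoc (chain_pt (chain m) s') (Ordinal i_lt4)).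
by rewrite mem_chain_set_snoc // restr_snoc leP_chain c_pt u_pt eqxx le_s !andbT.
Qed.

Lemma dsig_ext (I : Type) (F : I -> Type) (Q : (forall i, F i) -> Prop)
    (u v : {f : forall i, F i | Q f}) :
  (forall i, proj1_sig u i = proj1_sig v i) -> u = v.
Proof.
case: u v => [f Qf] [g Qg] /= /(functional_extensionality_dep f g) fg.
by subst g; congr exist; apply: proof_irrelevance.
Qed.

Lemma chain_count_compat (A : OP) n :
  q (chain_count (proj1_sig A n.+1)) = chain_count (proj1_sig A n).
Proof.
case: A => A [downA hatA] /=; case: n => [|n].
  by apply/ffunP => t; case: (T0_empty t).
by rewrite -(hatA n.+1) -{2}(chain_setK (ltn0Sn _) (downA n.+2)) hatp_chain_set // chain_countK.
Qed.

Definition count_limit (A : OP) : QL :=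
  exist _ (fun n => chain_count (proj1_sig A n)) (chain_count_compat A).

(* [T 0] is empty, so level 0 has to be recovered from level 1. *)
Definition set_family (f : QL) (n : nat) : {set P n} :=
  if n is m.+1 then chain_set (proj1_sig f m.+1) else hatp (chain_set (proj1_sig f 1)).

Lemma downset_P0 (A : {set P 0}) : downset A.
Proof. by move=> x y _; rewrite (P0_eq x y). Qed.

Lemma set_family_compat (f : QL) :
  (forall n, downset (set_family f n)) /\ (forall n, hatp (set_family f n.+1) = set_family f n).
Proof.
split; first by case=> [|n]; [apply: downset_P0 | apply: chain_set_downset].
by case=> [|n] //=; rewrite hatp_chain_set // (proj2_sig f n.+1).
Qed.

Definition set_limit (f : QL) : OP := exist _ (set_family f) (set_family_compat f).

Theorem mainTheorem19 :
  exists phi : OP -> QL,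
    bijective phi /\ (forall A B : OP, OP_le A B <-> QL_le (phi A) (phi B)).
Proof.
exists count_limit; split.
  exists set_limit => [[A [downA hatA]]|f]; apply: dsig_ext => -[|n] /=.
  - by rewrite chain_setK // (hatA 0).
  - by rewrite chain_setK.
  - by apply/ffunP => t; case: (T0_empty t).
  - by rewrite chain_countK.
move=> [A [downA hatA]] [B [downB hatB]]; rewrite /OP_le /QL_le /=.
split => [sAB n t|le_count].
  exact: chain_count_mono.
have sAB n : A n.+1 \subset B n.+1.
  rewrite -(chain_setK (ltn0Sn n) (downA n.+1)) -(chain_setK (ltn0Sn n) (downB n.+1)).
  exact: chain_set_mono (le_count n.+1).
by case=> [|n] //; rewrite -(hatA 0) -(hatB 0) hatp_mono.
Qed.
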